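(* Let $M/K$ be obtained by strong cluster magnification from a subextension $L/K$ with $r_K(L)\ne1$. Then for fields $N_1,\dots,N_k$, the chain $M\supsetneq N_1\supsetneq\cdots\supsetneq N_k$ is the unique descending chain for $M/K$ if and only if $L\supsetneq N_1\supsetneq\cdots\supsetneq N_k$ is the unique descending chain for $L/K$.
   Context: $K$ is a perfect field with a fixed algebraic closure $\bar K$; all extensions finite inside $\bar K$; $\tilde L$ is the Galois closure of $L/K$. Cluster size $r_K(L)$: the number of roots in $L$ of the minimal polynomial over $K$ of a primitive element of $L/K$ (equals $|{\rm Aut}(L/K)|$). Strong cluster magnification: $M/K$ is obtained by strong cluster magnification from $L/K$ ($K\subseteq L\subseteq M$) if $[L:K]>2$ and there is a finite Galois $F/K$ with $\tilde L$ and $F$ linearly disjoint over $K$ and $LF=M$. The unique descending chain of a finite extension $P/K$ is $P=N_0\supsetneq N_1\supsetneq\cdots\supsetneq N_k$ where each $N_i$ is the unique intermediate field of $N_{i-1}/K$ with $N_{i-1}/N_i$ Galois of degree $r_K(N_{i-1})$, stopping at the first $N_k$ with $r_K(N_k)=1$. *)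

From HB Require Import structures.
From mathcomp Require Import all_boot all_order all_algebra all_fingroup all_field.
Set Implicit Arguments. Unset Strict Implicit. Unset Printing Implicit Defensive.
Import GRing.Theory.
Local Open Scope ring_scope.

(* Setting: the base field K of the paper is the base field [F] of an ambient
   finite normal (and separable) extension [Om : splittingFieldType F]; all
   finite extensions of K considered are subfields of [Om] (they all contain
   the image of F, i.e. 1%AS). *)

Definition perfect_field (F : fieldType) : Prop :=
  forall p : nat, p \in [pchar F] -> forall x : F, exists y : F, y ^+ p = x.

Section Defs.
Variables (F : fieldType) (Om : splittingFieldType F).

(* cluster size r_K(E) = |Aut(E/K)|; 'Gal(E / 1) is the group of
   automorphisms of E fixing the base field K = F. *)
Definition cluster_size (E : {subfield Om}) : nat := #|('Gal(E / 1%AS))%g|.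

Definition galois_closure (E : {subfield Om}) : {vspace Om} :=
  (\big[@prodv F Om/1%VS]_(s in ('Gal({:Om} / 1%AS))%g) (s @: E))%VS.

Definition lin_indep_over (B : {vspace Om}) (X : seq Om) : Prop :=
  forall c : seq Om, size c = size X -> all (fun a => a \in B) c ->
    \sum_(i < size X) c`_i * X`_i = 0 -> all (fun a => a == 0) c.

Definition lin_disjoint (A B : {vspace Om}) : Prop :=
  forall X : seq Om, all (fun x => x \in A) X ->
    lin_indep_over 1%VS X -> lin_indep_over B X.

Definition strong_cluster_magnification (L M : {subfield Om}) : Prop :=
  (L <= M)%VS /\ (2 < \dim L)%N /\
  exists Fg : {subfield Om},
    galois 1%AS Fg /\ lin_disjoint (galois_closure L) Fg /\
    (L * Fg)%VS = M.

Definition chain_step (P N : {subfield Om}) : Prop :=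
  (N <= P)%VS /\ galois N P /\ \dim_N P = cluster_size P.

(* [desc_chain P s] : P = N_0 ⊋ s_1 ⊋ ... ⊋ s_k is the unique descending
   chain of P/K, stopping at the first field of cluster size 1. *)
Fixpoint desc_chain (P : {subfield Om}) (s : seq {subfield Om}) : Prop :=
  match s with
  | [::] => cluster_size P = 1%N
  | N :: s' =>
      cluster_size P <> 1%N /\ chain_step P N /\
      (forall N', chain_step P N' -> N' = N) /\ desc_chain N s'
  end.

End Defs.

(* The field following P in its
   descending chain is the fixed field N(P) of Aut(P/K), and every element of
   Aut(P/K) extends to Om; so N(P) is the set of x in P fixed by every
   automorphism t of Om with t(P) = P.  For M = LE, with E/K Galois, such a t
   stabilises L iff it stabilises M: if t(L) = L then t(M) = t(L)t(E) = LE
   since E/K is normal; conversely if t(M) = M then t(L) lies in M and in the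
   Galois closure of L, and linear disjointness of that closure from E forces
   t(L) <= L.  Hence N(L) = N(M), and r_K(M) <> 1 since otherwise
   M = N(M) = N(L) <= L.  So both chains continue with the same fields. *)

From HB Require Import structures.
From mathcomp Require Import all_boot all_order all_algebra all_fingroup all_field.
Set Implicit Arguments. Unset Strict Implicit. Unset Printing Implicit Defensive.
Import GRing.Theory.
Local Open Scope ring_scope.

Section DescendingChain.
Variables (F : fieldType) (Om : splittingFieldType F).
Implicit Types (E P Q : {subfield Om}) (t : gal_of {:Om}).

Lemma free_lin_indep_over1 (X : seq Om) : free X -> lin_indep_over 1%VS X.
Proof.
move=> /(@freeP _ _ _ (in_tuple X)) freeX c szc /allP c1 sum0.
have /fin_all_exists[k ck] : forall i : 'I_(size X), exists a : F, c`_i = a%:A.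
  move=> i; have /vlineP[a ->] : c`_i \in 1%VS by rewrite c1 ?mem_nth ?szc.
  by exists a.
have k0 : forall i, k i = 0.
  by apply: freeX; rewrite -[RHS]sum0; apply: eq_bigr => i _; rewrite ck mulr_algl.
apply/(all_nthP 0) => i; rewrite szc => ltiX.
by rewrite (ck (Ordinal ltiX)) k0 scale0r.
Qed.

Lemma free_cons_vbasis (U : {vspace Om}) z : z \notin U -> free (z :: vbasis U).
Proof.
by move=> Uz; rewrite free_cons (span_basis (vbasisP U)) Uz (basis_free (vbasisP U)).
Qed.

Lemma memv_prodv_vbasis (U V : {vspace Om}) z : z \in (U * V)%VS ->
  exists2 d : 'I_(\dim U) -> Om, (forall i, d i \in V) & z = \sum_i d i * (vbasis U)`_i.
Proof.
pose e := vbasis U.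
have : (V * U <= \sum_(i < \dim U) V * <[e`_i]>)%VS.
  apply/prodvP=> v u Vv Uu; rewrite (coord_vbasis Uu) mulr_sumr; apply: memv_sumr => i _.
  by rewrite -scalerAr memvZ // memv_mul // memv_line.
rewrite prodvC => /subvP sub /sub/memv_sumP[vs Vvs ->].
have /fin_all_exists2[d Vd vsE] : forall i, exists2 d, d \in V & vs i = d * e`_i.
  move=> i; have := Vvs i isT; rewrite -limg_amulr => /memv_imgP[d Vd ->].
  by exists d; rewrite ?lfunE.
by exists d => //; apply: eq_bigr => i _; rewrite vsE.
Qed.

Lemma lin_disjoint_prodv (T U : {vspace Om}) (V : {aspace Om}) z :
  (U <= T)%VS -> lin_disjoint T V -> z \in T -> z \in (U * V)%VS -> z \in U.
Proof.
move=> sUT disjTV Tz /memv_prodv_vbasis[d Vd zE]; apply: contraT => Uz.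
pose c := 1 :: [seq - d i | i <- enum 'I_(\dim U)].
have TX : all (fun x => x \in T) (z :: vbasis U).
  by rewrite /= Tz; apply/allP => x /vbasis_mem/(subvP sUT).
have := disjTV _ TX (free_lin_indep_over1 (free_cons_vbasis Uz)) c.
rewrite /= size_map size_enum_ord size_tuple mem1v oner_eq0 => /(_ erefl).
apply; first by apply/allP => _ /mapP[i _ ->]; rewrite memvN.
rewrite big_ord_recl /= mul1r zE -big_split /= big1 // => i _.
by rewrite add0n (nth_map i) ?size_enum_ord // nth_ord_enum mulNr subrr.
Qed.

Lemma mem_gal1 E (x : gal_of E) : x \in ('Gal(E / 1%AS))%g.
Proof. by rewrite gal_kAut ?sub1v // kAut1E limg_gal. Qed.

Lemma limg_stable_eq t E : (t @: E <= E)%VS -> (t @: E)%VS = E.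
Proof. by rewrite -kAut1E => /andP[_ /eqP]. Qed.

Lemma normalField_limg E t : normalField 1 E -> (t @: E)%VS = E.
Proof.
move=> normE; have sE : (1%AS <= E <= {:Om})%VS by rewrite sub1v subvf.
have autt : kAut 1 {:Om} t by rewrite kAut1E subvf.
by case/andP: (normalField_kAut sE normE autt) => _ /eqP.
Qed.

Lemma limg_sub_galois_closure E t : (t @: E <= galois_closure E)%VS.
Proof.
rewrite /galois_closure (bigD1 t) ?mem_gal1 //= -{1}(prodv1 (t @: E)%VS).
apply/prodvSr/(big_ind (fun V : {vspace Om} => (1 <= V)%VS)) => //.
  by move=> U V sU sV; rewrite -(prodv1 1%VS) prodvS.
by move=> u _; rewrite -(aimg1 u) limgS ?sub1v.
Qed.

Lemma sub_galois_closure E : (E <= galois_closure E)%VS.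
Proof.
have id1 : ((1%g : gal_of {:Om}) @: E)%VS = E.
  by rewrite -{2}(lim1g E); apply: eq_in_limg => a _; rewrite gal_id id_lfunE.
by rewrite -{1}id1 limg_sub_galois_closure.
Qed.

Definition aut_fixedField E : {subfield Om} :=
  fixedField_aspace ('Gal(E / 1%AS))%g.

Lemma aut_fixedFieldP E x :
  x \in aut_fixedField E <->
  x \in E /\ forall t, (t @: E)%VS = E -> t x = x.
Proof.
split=> [/mem_fixedFieldP[Ex fixx] | [Ex fixx]].
  by split=> // t tE; rewrite -(galK _ Ex) ?tE // fixx ?mem_gal1.
apply/fixedFieldP=> // y galEy.
have sE : (1%AS <= E <= {:Om})%VS by rewrite sub1v subvf.
have homy : kHom 1%AS E y by rewrite -gal_kHom ?sub1v.
have [t _ ty] := kHom_to_gal sE (normalFieldf 1%AS) homy.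
by rewrite ty // fixx // -(eq_in_limg ty) limg_gal.
Qed.

Lemma chain_stepE P N : chain_step P N <-> N = aut_fixedField P.
Proof.
split=> [[sNP [galNP dimNP]] | ->]; last first.
  split; first exact: fixedField_bound.
  split; first exact: fixedField_galois.
  by rewrite /cluster_size (dim_fixedField ('Gal(P / 1%AS))%G).
have galE : ('Gal(P / N))%g = ('Gal(P / 1%AS))%g.
  apply/eqP; rewrite eqEcard galS ?sub1v //= -(galois_dim galNP) dimNP.
  exact: leqnn.
by apply/val_inj; rewrite /= -galE (galois_fixedField galNP).
Qed.

Lemma cluster_size_eq1 P : cluster_size P = 1%N <-> aut_fixedField P = P.
Proof.
split=> [/eqP/cards1P[w galPw] | fixP]; last first.
  rewrite /cluster_size (dim_fixedField ('Gal(P / 1%AS))%G).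
  by move/(congr1 val): fixP => /= ->; rewrite divnn adim_gt0.
apply/val_inj/eqP; rewrite /= eqEsubv fixedField_bound.
apply/subvP=> x Px; apply/fixedFieldP=> // y.
have : (1%g : gal_of P) \in ('Gal(P / 1%AS))%g := group1 _.
by rewrite galPw !inE => /eqP <- /eqP ->; rewrite gal_id.
Qed.

Lemma desc_chain_cons P N s :
  desc_chain P (N :: s) <->
  [/\ cluster_size P <> 1%N, N = aut_fixedField P & desc_chain N s].
Proof.
split=> [[nP [/chain_stepE stepN [_ chainN]]] | [nP defN chainN]] //.
split=> //; split; first exact/chain_stepE.
by split=> // N' /chain_stepE ->.
Qed.

Lemma desc_chain_aut_fixedField P Q s :
  aut_fixedField P = aut_fixedField Q ->
  cluster_size P <> 1%N -> cluster_size Q <> 1%N ->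
  desc_chain P s <-> desc_chain Q s.
Proof.
move=> eqPQ nP nQ; case: s => [|N s] /=; first by split=> ?; [case: nP | case: nQ].
by split=> /desc_chain_cons[_ defN chainN];
  apply/desc_chain_cons; split; rewrite // defN eqPQ.
Qed.

Lemma mem_stabilizer_fixed E x : galois 1%AS {:Om} ->
  (forall t, (t @: E)%VS = E -> t x = x) -> x \in E.
Proof.
move=> galOm fixx; have galE : galois E {:Om} by rewrite (galoisS _ galOm) ?sub1v ?subvf.
rewrite -(galois_fixedField galE); apply/fixedFieldP=> [|t galt]; first exact: memvf.
apply: fixx; rewrite -{2}(lim1g E); apply: eq_in_limg => a Ea.
by rewrite id_lfunE (fixed_gal (subvf E) galt).
Qed.

End DescendingChain.

Section Magnification.
Variables (F : fieldType) (Om : splittingFieldType F) (L E M : {subfield Om}).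
Hypotheses (normE : normalField 1 E) (disjLE : lin_disjoint (galois_closure L) E).
Hypothesis defM : (L * E)%VS = M.

Lemma magnification_sub : (L <= M)%VS.
Proof. by rewrite -defM field_subvMr. Qed.

Lemma magnification_limg_eq (t : gal_of {:Om}) :
  (t @: L)%VS = L <-> (t @: M)%VS = M.
Proof.
split=> [tL | tM]; first by rewrite -defM aimgM tL normalField_limg.
apply: limg_stable_eq; apply/subvP=> _ /memv_imgP[y Ly ->].
apply: lin_disjoint_prodv (sub_galois_closure L) disjLE _ _.
  exact/(subvP (limg_sub_galois_closure L t))/memv_img.
by rewrite defM -tM memv_img // (subvP magnification_sub).
Qed.

Lemma magnification_aut_fixedField :
  galois 1%AS {:Om} -> aut_fixedField L = aut_fixedField M.
Proof.
move=> galOm; apply/val_inj/vspaceP=> x; apply/idP/idP.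
  case/aut_fixedFieldP=> Lx fixx; apply/aut_fixedFieldP.
  split=> [|t /magnification_limg_eq]; [exact: (subvP magnification_sub) | exact: fixx].
case/aut_fixedFieldP=> _ fixx; apply/aut_fixedFieldP.
have Lx : x \in L.
  by apply: mem_stabilizer_fixed => // t /magnification_limg_eq; exact: fixx.
by split=> // t /magnification_limg_eq; exact: fixx.
Qed.

Lemma magnification_cluster_size_neq1 :
  galois 1%AS {:Om} -> cluster_size L <> 1%N -> cluster_size M <> 1%N.
Proof.
move=> galOm nL /cluster_size_eq1 fixM; apply/nL/cluster_size_eq1.
have eqLM := magnification_aut_fixedField galOm.
have sML : (M <= L)%VS by rewrite -fixM -eqLM fixedField_bound.
have {sML} eqML : M = L by apply/val_inj/subv_anti; rewrite sML magnification_sub.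
by rewrite eqLM fixM eqML.
Qed.

End Magnification.

Theorem theorem8p14 (F : fieldType) (Om : splittingFieldType F)
  (perfF : perfect_field F) (galOm : galois 1%AS (fullv : {vspace Om}))
  (L M : {subfield Om})
  (hmag : strong_cluster_magnification L M)
  (hrL : cluster_size L <> 1%N)
  (s : seq {subfield Om}) :
  desc_chain M s <-> desc_chain L s.
Proof.
case: hmag => _ [_ [E [/and3P[_ _ normE] [disjLE defM]]]].
have eqLM := magnification_aut_fixedField normE disjLE defM galOm.
have nM := magnification_cluster_size_neq1 normE disjLE defM galOm hrL.
exact: desc_chain_aut_fixedField (esym eqLM) nM hrL.
Qed.
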